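(* Let $G$ be a group, $S \subset G$ a finite set of semigroup generators of $G$, $\Sigma$ a finite alphabet, $L \subseteq \Sigma^*$ a language and $\psi : L \to G$ a bijection. Suppose that for every $s \in S$ there is a function $f_s : \Sigma^* \to \Sigma^*$ with $\psi(f_s(w)) = \psi(w)s$ for all $w \in L$, such that $f_s$ is computed by a one-tape Turing machine in time $o(n \log n)$, in the following sense: there is a one-tape Turing machine $\mathrm{TM}_s$ and a function $T_s(n)$ with $T_s(n)/(n\log n) \to 0$ such that on every input $x \in \Sigma^*$ of length $n$ (tape initially $\boxplus x \boxdot^\infty$, head on $\boxplus$), $\mathrm{TM}_s$ halts within $T_s(n)$ steps with tape content $\boxplus y \boxdot^\infty$, where $y$ is empty or does not end in $\boxdot$, and $f_s(x)$ is the string obtained from $y$ by deleting all symbols not in $\Sigma$. Then the normal form $\psi$ is quasigeodesic: there exists a constant $C > 0$ such that for every $g \in G$, $|w| \leqslant C(d_S(g) + 1)$, where $w \in L$ is the unique string with $\psi(w) = g$.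
   Context: A one-tape Turing machine has one semi-infinite tape whose leftmost cell contains the unmodifiable symbol $\boxplus$ (occurring only there); $\boxdot$ denotes the blank symbol; the tape alphabet contains $\Sigma \cup \{\boxplus, \boxdot\}$. For $g \in G$, $d_S(g)$ denotes the length of a shortest word $g_1 \dots g_n$ with $g_i \in S$ such that $g = g_1 \cdots g_n$ in $G$. $|w|$ denotes the length of the string $w$. *)

From Stdlib Require Export Reals List Arith.
Export ListNotations.
Open Scope R_scope.

Definition FiniteType (T : Type) : Prop := exists l : list T, forall x : T, In x l.

Inductive move := MLeft | MRight | MStay.

(** One-tape Turing machine over input alphabet Sigma, with a semi-infinite
    tape whose leftmost cell carries the unmodifiable end marker [lend]
    (the symbol ⊞), which occurs only there; [blank] is ⊡. *)
Record TM (Sigma : Type) := {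
  tstate : Type;
  tstate_fin : FiniteType tstate;
  tsym : Type;
  tsym_fin : FiniteType tsym;
  ofSigma : Sigma -> tsym;
  toSigma : tsym -> option Sigma;
  toSigma_spec : forall (a : tsym) (x : Sigma), toSigma a = Some x <-> a = ofSigma x;
  lend : tsym;
  blank : tsym;
  lend_blank : lend <> blank;
  lend_notSigma : toSigma lend = None;
  blank_notSigma : toSigma blank = None;
  tstart : tstate;
  thalting : tstate -> bool;
  delta : tstate -> tsym -> tstate * tsym * move;
  delta_lend : forall q, snd (fst (delta q lend)) = lend /\ snd (delta q lend) <> MLeft;
  delta_nolend : forall q a, a <> lend -> snd (fst (delta q a)) <> lend
}.

Arguments tstate {Sigma}.
Arguments tsym {Sigma}.
Arguments ofSigma {Sigma}.
Arguments toSigma {Sigma}.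
Arguments lend {Sigma}.
Arguments blank {Sigma}.
Arguments tstart {Sigma}.
Arguments thalting {Sigma}.
Arguments delta {Sigma}.

Record config {Sigma : Type} (M : TM Sigma) := mkConfig {
  cstate : tstate M;
  ctape : nat -> tsym M;
  chead : nat
}.
Arguments mkConfig {Sigma M}.
Arguments cstate {Sigma M}.
Arguments ctape {Sigma M}.
Arguments chead {Sigma M}.

Definition step {Sigma : Type} (M : TM Sigma) (c : config M) : config M :=
  if thalting M (cstate c) then c else
  match delta M (cstate c) (ctape c (chead c)) with
  | (q', a, m) =>
      mkConfig q'
        (fun i => if Nat.eqb i (chead c) then a else ctape c i)
        (match m with
         | MLeft => pred (chead c)
         | MRight => S (chead c)
         | MStay => chead c
         end)
  end.

Fixpoint run {Sigma : Type} (M : TM Sigma) (k : nat) (c : config M) : config M :=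
  match k with
  | O => c
  | S k' => run M k' (step M c)
  end.

Definition init_config {Sigma : Type} (M : TM Sigma) (x : list Sigma) : config M :=
  mkConfig (tstart M)
    (fun i => match i with
              | O => lend M
              | S j => match nth_error x j with
                       | Some a => ofSigma M a
                       | None => blank M
                       end
              end)
    O.

Definition tape_content {Sigma : Type} (M : TM Sigma) (t : nat -> tsym M)
    (y : list (tsym M)) : Prop :=
  t O = lend M /\
  (forall j a, nth_error y j = Some a -> t (S j) = a) /\
  (forall i, (length y < i)%nat -> t i = blank M) /\
  (y = [] \/ exists y' a, y = y' ++ [a] /\ a <> blank M).

Definition erase_nonSigma {Sigma : Type} (M : TM Sigma) (y : list (tsym M)) : list Sigma :=
  flat_map (fun a => match toSigma M a with Some x => [x] | None => [] end) y.

Definition computes_in_time {Sigma : Type} (M : TM Sigma) (T : nat -> nat)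
    (f : list Sigma -> list Sigma) : Prop :=
  forall x : list Sigma,
    let c := run M (T (length x)) (init_config M x) in
    thalting M (cstate c) = true /\
    exists y, tape_content M (ctape c) y /\ f x = erase_nonSigma M y.

Definition little_o_nlogn (T : nat -> nat) : Prop :=
  forall eps : R, 0 < eps -> exists N : nat, forall n : nat, (N <= n)%nat ->
    INR (T n) <= eps * (INR n * ln (INR n)).

Definition prodG {G : Type} (mul : G -> G -> G) (one : G) (ws : list G) : G :=
  fold_right mul one ws.

Definition semigroup_generates {G : Type} (mul : G -> G -> G) (one : G) (S : list G) : Prop :=
  forall g : G, exists ws : list G,
    ws <> [] /\ (forall x, In x ws -> In x S) /\ prodG mul one ws = g.

Definition word_length {G : Type} (mul : G -> G -> G) (one : G) (S : list G)
    (g : G) (n : nat) : Prop :=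
  (exists ws : list G, length ws = n /\ (forall x, In x ws -> In x S) /\ prodG mul one ws = g) /\
  (forall ws : list G, (forall x, In x ws -> In x S) -> prodG mul one ws = g -> (n <= length ws)%nat).

(* A one-tape machine running in time o(n log n) never moves its head more than a constant
   number B of cells beyond its input.  Otherwise take a shortest input x on which the head gets
   beyond |x| + B.  If two boundaries i < j <= |x| had the same crossing sequence, the run on x
   with x[i..j) cut out would replay the run on x, shifted, on either side of the cut, so the
   head would get beyond |x| - (j - i) + B on a shorter input.  Hence the |x| + 1 crossing
   sequences are pairwise distinct; as at most r^L of them are shorter than L (r - 1 being the
   number of states), their total length, which is at most the running time, is of order
   |x| log |x|: a contradiction.  Consequently every f_s lengthens its argument by at most a
   constant, and following a shortest word for g from the normal form of 1 produces the normal
   form of g. *)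

From Stdlib Require Import Lia Lra.
Local Open Scope nat_scope.

Fixpoint sum_lengths {A : Type} (F : nat -> list A) (p : nat) : nat :=
  match p with 0 => 0 | S p => sum_lengths F p + length (F p) end.

Section Machine.
Context {Sigma : Type} (M : TM Sigma).

Definition halted (c : config M) : Prop := thalting M (cstate c) = true.

Definition shift_head (m : move) (h : nat) : nat :=
  match m with MLeft => pred h | MRight => S h | MStay => h end.

Lemma run_S k c : run M (S k) c = step M (run M k c).
Proof.
  revert c; induction k as [|k IH]; intro c; [reflexivity|].
  change (run M (S (S k)) c) with (run M (S k) (step M c)); rewrite IH; reflexivity.
Qed.

Lemma step_halted c : halted c -> step M c = c.
Proof. unfold halted, step; intro H; rewrite H; reflexivity. Qed.

Lemma run_halted_stable c t t' : halted (run M t c) -> t <= t' -> run M t' c = run M t c.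
Proof.
  intros H Ht; induction Ht as [|t' _ IH]; [reflexivity|].
  rewrite run_S, IH; apply step_halted; exact H.
Qed.

Lemma step_active c q a m :
  ~ halted c -> delta M (cstate c) (ctape c (chead c)) = (q, a, m) ->
  cstate (step M c) = q /\
  (forall p, ctape (step M c) p = if Nat.eqb p (chead c) then a else ctape c p) /\
  chead (step M c) = shift_head m (chead c).
Proof.
  unfold halted, step; intros Hrun Hdelta.
  destruct (thalting M (cstate c)); [contradiction Hrun; reflexivity|].
  rewrite Hdelta; repeat split; destruct m; reflexivity.
Qed.

Lemma step_head_near c : chead (step M c) <= S (chead c) /\ chead c <= S (chead (step M c)).
Proof.
  unfold step; destruct (thalting M (cstate c)); [simpl; lia|].
  destruct (delta M (cstate c) (ctape c (chead c))) as [[q a] []]; simpl; lia.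
Qed.

Lemma step_tape_off_head c p : p <> chead c -> ctape (step M c) p = ctape c p.
Proof.
  intro Hp; unfold step; destruct (thalting M (cstate c)); [reflexivity|].
  destruct (delta M (cstate c) (ctape c (chead c))) as [[q a] m]; simpl.
  destruct (Nat.eqb_spec p (chead c)); [contradiction|reflexivity].
Qed.

Section Trajectory.
Variable c : config M.
Local Notation C t := (run M t c).

Lemma head_le_time t : chead c = 0 -> chead (C t) <= t.
Proof.
  intro H0; induction t as [|t IH]; [simpl; lia|].
  rewrite run_S; destruct (step_head_near (C t)); lia.
Qed.

Lemma head_passes_through t p : chead c = 0 -> p <= chead (C t) -> exists t', chead (C t') = p.
Proof.
  intro H0; induction t as [|t IH]; intro Hp; [exists 0; simpl in *; lia|].
  destruct (Nat.le_gt_cases p (chead (C t))); [auto|].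
  exists (S t); rewrite run_S in *; destruct (step_head_near (C t)); lia.
Qed.

Lemma tape_unvisited p t t' : t <= t' -> (forall s, t <= s < t' -> chead (C s) <> p) ->
  ctape (C t') p = ctape (C t) p.
Proof.
  intros Ht Hp; induction Ht as [|t' Ht IH]; [reflexivity|].
  rewrite run_S, step_tape_off_head by (apply not_eq_sym, Hp; lia).
  apply IH; intros; apply Hp; lia.
Qed.

Definition crosses (b t : nat) : bool :=
  ((chead (C t) =? b) && (chead (C (S t)) =? S b)) ||
  ((chead (C t) =? S b) && (chead (C (S t)) =? b)).

Lemma crosses_iff b t : crosses b t = true <->
  (chead (C t) = b /\ chead (C (S t)) = S b) \/ (chead (C t) = S b /\ chead (C (S t)) = b).
Proof. unfold crosses; rewrite Bool.orb_true_iff, !Bool.andb_true_iff, !Nat.eqb_eq; tauto. Qed.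

Lemma crosses_false b t : crosses b t = false <->
  ~ ((chead (C t) = b /\ chead (C (S t)) = S b) \/ (chead (C t) = S b /\ chead (C (S t)) = b)).
Proof. rewrite <- crosses_iff, Bool.not_true_iff_false; reflexivity. Qed.

Fixpoint crossing_seq (b t : nat) : list (tstate M) :=
  match t with
  | 0 => []
  | S t => crossing_seq b t ++ (if crosses b t then [cstate (C (S t))] else [])
  end.

Definition crossings (b t : nat) : nat := length (crossing_seq b t).

Lemma crossings_S b t : crossings b (S t) = crossings b t + (if crosses b t then 1 else 0).
Proof. unfold crossings; simpl; rewrite length_app; destruct (crosses b t); reflexivity. Qed.

Lemma crossings_mono b t t' : t <= t' -> crossings b t <= crossings b t'.
Proof. intro H; induction H; rewrite ?crossings_S; lia. Qed.

Lemma no_crossing_between b t u s :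
  crossings b t = crossings b u -> t <= s < u -> crosses b s = false.
Proof.
  intros Hn Hs; destruct (crosses b s) eqn:E; [|reflexivity].
  assert (crossings b t <= crossings b s) by (apply crossings_mono; lia).
  assert (crossings b (S s) <= crossings b u) by (apply crossings_mono; lia).
  rewrite crossings_S, E in *; lia.
Qed.

Lemma crossing_seq_nth b u H : crosses b u = true -> u < H ->
  nth_error (crossing_seq b H) (crossings b u) = Some (cstate (C (S u))).
Proof.
  intros Hc; induction H as [|H IH]; intro Hu; [lia|]; simpl.
  destruct (Nat.eq_dec u H) as [->|Hne].
  - rewrite Hc, nth_error_app2 by reflexivity; unfold crossings; rewrite Nat.sub_diag; reflexivity.
  - assert (crossings b (S u) <= crossings b H) by (apply crossings_mono; lia).
    rewrite crossings_S, Hc in *.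
    rewrite nth_error_app1 by (unfold crossings in *; lia); apply IH; lia.
Qed.

Lemma crossing_seq_nth_inv b k H : k < crossings b H ->
  exists u, u < H /\ crosses b u = true /\ crossings b u = k.
Proof.
  induction H as [|H IH]; intro Hk; [cbn in Hk; lia|].
  rewrite crossings_S in Hk; destruct (crosses b H) eqn:E.
  - destruct (Nat.eq_dec k (crossings b H)) as [->|Hne]; [exists H; auto|].
    destruct IH as [u ?]; [lia|]; exists u; intuition lia.
  - destruct IH as [u ?]; [lia|]; exists u; intuition lia.
Qed.

Lemma crossings_after_halt b t t' : halted (C t) -> t <= t' -> crossings b t' = crossings b t.
Proof.
  intros Hh Ht; induction Ht as [|t' Ht IH]; [reflexivity|].
  rewrite crossings_S, IH; enough (crosses b t' = false) as -> by lia.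
  apply crosses_false.
  rewrite (run_halted_stable c t t'), (run_halted_stable c t (S t')) by (assumption || lia); lia.
Qed.

Lemma stays_left b t s : t <= s -> chead (C t) <= b ->
  (forall s', t <= s' < s -> crosses b s' = false) -> chead (C s) <= b.
Proof.
  intros Hs Ht Hn; induction Hs as [|s Hs IH]; [exact Ht|].
  assert (chead (C s) <= b) by (apply IH; intros; apply Hn; lia).
  assert (Hc := Hn s ltac:(lia)); rewrite crosses_false in Hc.
  destruct (step_head_near (C s)); rewrite <- run_S in *; lia.
Qed.

Lemma stays_right b t s : t <= s -> b < chead (C t) ->
  (forall s', t <= s' < s -> crosses b s' = false) -> b < chead (C s).
Proof.
  intros Hs Ht Hn; induction Hs as [|s Hs IH]; [exact Ht|].
  assert (b < chead (C s)) by (apply IH; intros; apply Hn; lia).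
  assert (Hc := Hn s ltac:(lia)); rewrite crosses_false in Hc.
  destruct (step_head_near (C s)); rewrite <- run_S in *; lia.
Qed.

(* At each step at most one boundary, the smaller of the two head positions, is crossed. *)
Lemma sum_crossings_S P t :
  sum_lengths (fun b => crossing_seq b (S t)) P <=
  sum_lengths (fun b => crossing_seq b t) P +
  (if Nat.min (chead (C t)) (chead (C (S t))) <? P then 1 else 0).
Proof.
  induction P as [|P IH]; cbn [sum_lengths]; [lia|].
  fold (crossings P (S t)) (crossings P t); rewrite crossings_S.
  destruct (crosses P t) eqn:E.
  - apply crosses_iff in E.
    replace (Nat.min (chead (C t)) (chead (C (S t)))) with P in * by lia.
    rewrite Nat.ltb_irrefl in IH; rewrite (proj2 (Nat.ltb_lt P (S P))) by lia; lia.
  - destruct (Nat.ltb_spec (Nat.min (chead (C t)) (chead (C (S t)))) P);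
    destruct (Nat.ltb_spec (Nat.min (chead (C t)) (chead (C (S t)))) (S P)); lia.
Qed.

Lemma sum_crossings_le_time P t : sum_lengths (fun b => crossing_seq b t) P <= t.
Proof.
  induction t as [|t IH].
  - induction P; simpl in *; lia.
  - pose proof (sum_crossings_S P t); destruct (_ <? P); lia.
Qed.

End Trajectory.
End Machine.

Section CutAndPaste.
Context {Sigma : Type} (M : TM Sigma).
Variables (c c' : config M) (i d H : nat).
Hypothesis head_c : chead c = 0.
Hypothesis head_c' : chead c' = 0.
Hypothesis state_c' : cstate c' = cstate c.
Hypothesis tape_c'_left : forall p, p <= i -> ctape c' p = ctape c p.
Hypothesis tape_c'_right : forall p, i < p -> ctape c' p = ctape c (p + d).
Hypothesis halted_by_H : halted M (run M H c).
Hypothesis same_crossing_seq : crossing_seq M c i H = crossing_seq M c (i + d) H.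

Local Notation C t := (run M t c).
Local Notation C' t := (run M t c').

Definition left_phase (t' tL tR : nat) : Prop :=
  chead (C' t') <= i /\ chead (C tL) = chead (C' t') /\
  cstate (C' t') = cstate (C tL) /\ chead (C tR) <= i + d.

Definition right_phase (t' tL tR : nat) : Prop :=
  i < chead (C' t') /\ chead (C tR) = chead (C' t') + d /\
  cstate (C' t') = cstate (C tR) /\ i < chead (C tL).

(* The run from [c'] at time [t'] is the run from [c] at time [tL] on the cells [<= i],
   and the run from [c] at time [tR] on the cells [> i + d], shifted left by [d];
   the head is in whichever part is being simulated. *)
Record simulated (t' tL tR : nat) : Prop := {
  sim_crossings : crossings M c i tL = crossings M c (i + d) tR;
  sim_tape_left : forall p, p <= i -> ctape (C' t') p = ctape (C tL) p;
  sim_tape_right : forall p, i < p -> ctape (C' t') p = ctape (C tR) (p + d);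
  sim_phase : left_phase t' tL tR \/ right_phase t' tL tR;
  sim_reach : forall s, s <= tR -> i + d < chead (C s) ->
    exists t'', chead (C' t'') + d = chead (C s)
}.

Lemma active_before_H t : ~ halted M (C t) -> t < H.
Proof.
  intro Hrun; destruct (Nat.lt_ge_cases t H) as [|Ht]; [assumption|].
  contradiction Hrun; rewrite (run_halted_stable M c H t) by assumption; exact halted_by_H.
Qed.

Lemma matching_crossing b b' t u0 :
  crossing_seq M c b H = crossing_seq M c b' H ->
  crosses M c b t = true -> ~ halted M (C t) -> crossings M c b t = crossings M c b' u0 ->
  exists u, u0 <= u /\ crosses M c b' u = true /\ crossings M c b' u = crossings M c b t /\
    cstate (C (S u)) = cstate (C (S t)) /\ forall s, u0 <= s < u -> crosses M c b' s = false.
Proof.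
  intros Hseq Hc Hrun Hn.
  pose proof (crossing_seq_nth M c b t H Hc (active_before_H t Hrun)) as Eb.
  assert (Hk : crossings M c b t < crossings M c b' H).
  { unfold crossings at 2; rewrite <- Hseq; apply nth_error_Some; rewrite Eb; discriminate. }
  destruct (crossing_seq_nth_inv M c b' _ H Hk) as [u [Hu [Hcu Hnu]]].
  pose proof (crossing_seq_nth M c b' u H Hcu Hu) as Eb'.
  rewrite Hnu, <- Hseq, Eb in Eb'.
  assert (Hu0 : u0 <= u).
  { destruct (Nat.le_gt_cases u0 u) as [|Hlt]; [assumption|].
    assert (crossings M c b' (S u) <= crossings M c b' u0) by (apply crossings_mono; lia).
    rewrite crossings_S, Hcu in *; lia. }
  exists u; repeat split; try assumption; [congruence|].
  intros s Hs; apply (no_crossing_between M c b' u0 u); lia.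
Qed.

Lemma simulated_start : simulated 0 0 0.
Proof.
  constructor; simpl; try assumption; [reflexivity| |].
  - left; unfold left_phase; simpl; rewrite head_c, head_c', state_c'; repeat split; lia.
  - intros s Hs; replace s with 0 by lia; simpl; lia.
Qed.

Lemma simulated_step_halted t' tL tR :
  simulated t' tL tR -> halted M (C' t') -> simulated (S t') tL tR.
Proof.
  intros Hsim Hh.
  assert (E : C' (S t') = C' t') by (rewrite run_S; apply step_halted; exact Hh).
  destruct Hsim; constructor; unfold left_phase, right_phase in *; rewrite ?E; assumption.
Qed.

Lemma left_step_sync t' tL tR :
  simulated t' tL tR -> left_phase t' tL tR -> ~ halted M (C' t') ->
  ~ halted M (C tL) /\ cstate (C' (S t')) = cstate (C (S tL)) /\
  chead (C' (S t')) = chead (C (S tL)) /\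
  forall p, p <= i -> ctape (C' (S t')) p = ctape (C (S tL)) p.
Proof.
  intros [_ HtL _ _ _] [Hl [HhL [HsL _]]] Hrun'.
  assert (Hrun : ~ halted M (C tL)) by (unfold halted in *; rewrite <- HsL; exact Hrun').
  destruct (delta M (cstate (C' t')) (ctape (C' t') (chead (C' t')))) as [[q a] m] eqn:Ed.
  assert (Ed2 : delta M (cstate (C tL)) (ctape (C tL) (chead (C tL))) = (q, a, m))
    by (rewrite <- HsL, HhL, <- HtL by exact Hl; exact Ed).
  destruct (step_active M (C' t') q a m Hrun' Ed) as [Sq' [St' Sh']].
  destruct (step_active M (C tL) q a m Hrun Ed2) as [Sq [St Sh]].
  rewrite !run_S, Sq', Sq, Sh', Sh, HhL; repeat split; [assumption|].
  intros p Hp; rewrite St', St, HtL, HhL by exact Hp; reflexivity.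
Qed.

Lemma right_step_sync t' tL tR :
  simulated t' tL tR -> right_phase t' tL tR -> ~ halted M (C' t') ->
  ~ halted M (C tR) /\ cstate (C' (S t')) = cstate (C (S tR)) /\
  chead (C (S tR)) = chead (C' (S t')) + d /\
  forall p, i < p -> ctape (C' (S t')) p = ctape (C (S tR)) (p + d).
Proof.
  intros [_ _ HtR _ _] [Hl [HhR [HsR _]]] Hrun'.
  assert (Hrun : ~ halted M (C tR)) by (unfold halted in *; rewrite <- HsR; exact Hrun').
  destruct (delta M (cstate (C' t')) (ctape (C' t') (chead (C' t')))) as [[q a] m] eqn:Ed.
  assert (Ed2 : delta M (cstate (C tR)) (ctape (C tR) (chead (C tR))) = (q, a, m))
    by (rewrite <- HsR, HhR, <- HtR by exact Hl; exact Ed).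
  destruct (step_active M (C' t') q a m Hrun' Ed) as [Sq' [St' Sh']].
  destruct (step_active M (C tR) q a m Hrun Ed2) as [Sq [St Sh]].
  rewrite !run_S, Sq', Sq, Sh', Sh, HhR; repeat split; [assumption|destruct m; simpl; lia|].
  intros p Hp; rewrite St', St, HtR, HhR by exact Hp.
  destruct (Nat.eqb_spec p (chead (C' t'))); destruct (Nat.eqb_spec (p + d) (chead (C' t') + d));
    reflexivity || lia.
Qed.

Lemma simulated_left_stay t' tL tR :
  simulated t' tL tR -> left_phase t' tL tR -> ~ halted M (C' t') ->
  chead (C' (S t')) <= i -> simulated (S t') (S tL) tR.
Proof.
  intros Hsim Hph Hrun' Hstay.
  destruct (left_step_sync t' tL tR Hsim Hph Hrun') as [_ [Sq [Sh St]]].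
  destruct Hsim as [Hn _ HtR _ Hreach], Hph as [Hl [HhL [_ HhR]]].
  assert (Hcr : crosses M c i tL = false) by (apply crosses_false; lia).
  constructor; [rewrite crossings_S, Hcr, Hn; lia|exact St| |left|exact Hreach].
  - intros p Hp; rewrite run_S, step_tape_off_head by lia; apply HtR; exact Hp.
  - repeat split; lia || congruence.
Qed.

Lemma simulated_left_cross t' tL tR :
  simulated t' tL tR -> left_phase t' tL tR -> ~ halted M (C' t') ->
  i < chead (C' (S t')) -> exists u, simulated (S t') (S tL) (S u).
Proof.
  intros Hsim Hph Hrun' Hcross.
  destruct (left_step_sync t' tL tR Hsim Hph Hrun') as [Hrun [Sq [Sh St]]].
  destruct Hsim as [Hn _ HtR _ Hreach], Hph as [Hl [HhL [_ HhR]]].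
  destruct (step_head_near M (C' t')); rewrite <- run_S in *.
  assert (Hcr : crosses M c i tL = true) by (apply crosses_iff; lia).
  destruct (matching_crossing i (i + d) tL tR same_crossing_seq Hcr Hrun Hn)
    as [u [Hu [Hcu [Hnu [Hsu Hnb]]]]].
  assert (Hleft : forall s, tR <= s <= u -> chead (C s) <= i + d)
    by (intros s Hs; apply (stays_left M c (i + d) tR s); try lia; intros; apply Hnb; lia).
  assert (Hhu : chead (C (S u)) = S (i + d))
    by (apply crosses_iff in Hcu; specialize (Hleft u ltac:(lia)); lia).
  exists u; constructor; [rewrite !crossings_S, Hcr, Hcu, Hnu; reflexivity|exact St| |right|].
  - intros p Hp; rewrite run_S, step_tape_off_head, HtR by lia.
    symmetry; apply tape_unvisited; [lia|].
    intros s Hs; specialize (Hleft s ltac:(lia)); lia.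
  - repeat split; lia || congruence.
  - intros s Hs Hj; destruct (Nat.le_gt_cases s tR); [apply Hreach; assumption|].
    destruct (Nat.eq_dec s (S u)) as [->|]; [exists (S t'); lia|].
    specialize (Hleft s ltac:(lia)); lia.
Qed.

Lemma simulated_right_cross t' tL tR :
  simulated t' tL tR -> right_phase t' tL tR -> ~ halted M (C' t') ->
  chead (C' (S t')) <= i -> exists u, simulated (S t') (S u) (S tR).
Proof.
  intros Hsim Hph Hrun' Hcross.
  destruct (right_step_sync t' tL tR Hsim Hph Hrun') as [Hrun [Sq [Sh St]]].
  destruct Hsim as [Hn HtL _ _ Hreach], Hph as [Hl [HhR [_ HhL]]].
  destruct (step_head_near M (C' t')); rewrite <- run_S in *.
  assert (Hcr : crosses M c (i + d) tR = true) by (apply crosses_iff; lia).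
  destruct (matching_crossing (i + d) i tR tL (eq_sym same_crossing_seq) Hcr Hrun (eq_sym Hn))
    as [u [Hu [Hcu [Hnu [Hsu Hnb]]]]].
  assert (Hright : forall s, tL <= s <= u -> i < chead (C s))
    by (intros s Hs; apply (stays_right M c i tL s); try lia; intros; apply Hnb; lia).
  assert (Hhu : chead (C (S u)) = i)
    by (apply crosses_iff in Hcu; specialize (Hright u ltac:(lia)); lia).
  exists u; constructor; [rewrite !crossings_S, Hcr, Hcu, Hnu; reflexivity| |exact St|left|].
  - intros p Hp; rewrite run_S, step_tape_off_head, HtL by lia.
    symmetry; apply tape_unvisited; [lia|].
    intros s Hs; specialize (Hright s ltac:(lia)); lia.
  - repeat split; lia || congruence.
  - intros s Hs Hj; destruct (Nat.le_gt_cases s tR); [apply Hreach; assumption|].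
    replace s with (S tR) in Hj by lia; lia.
Qed.

Lemma simulated_right_stay t' tL tR :
  simulated t' tL tR -> right_phase t' tL tR -> ~ halted M (C' t') ->
  i < chead (C' (S t')) -> simulated (S t') tL (S tR).
Proof.
  intros Hsim Hph Hrun' Hstay.
  destruct (right_step_sync t' tL tR Hsim Hph Hrun') as [_ [Sq [Sh St]]].
  destruct Hsim as [Hn HtL _ _ Hreach], Hph as [Hl [HhR [_ HhL]]].
  assert (Hcr : crosses M c (i + d) tR = false) by (apply crosses_false; lia).
  constructor; [rewrite crossings_S, Hcr, Hn; lia| |exact St|right|].
  - intros p Hp; rewrite run_S, step_tape_off_head by lia; apply HtL; exact Hp.
  - repeat split; lia || congruence.
  - intros s Hs Hj; destruct (Nat.le_gt_cases s tR); [apply Hreach; assumption|].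
    replace s with (S tR) in * by lia; exists (S t'); lia.
Qed.

Lemma simulated_always t' : exists tL tR, simulated t' tL tR.
Proof.
  induction t' as [|t' [tL [tR Hsim]]]; [exists 0, 0; exact simulated_start|].
  destruct (thalting M (cstate (C' t'))) eqn:Hh.
  { exists tL, tR; apply simulated_step_halted; assumption. }
  assert (Hrun' : ~ halted M (C' t')) by (unfold halted; congruence).
  destruct (sim_phase _ _ _ Hsim) as [Hph|Hph];
    destruct (Nat.le_gt_cases (chead (C' (S t'))) i) as [Hm|Hm].
  - exists (S tL), tR; apply simulated_left_stay; assumption.
  - destruct (simulated_left_cross t' tL tR) as [u ?]; try assumption; eauto.
  - destruct (simulated_right_cross t' tL tR) as [u ?]; try assumption; eauto.
  - exists tL, (S tR); apply simulated_right_stay; assumption.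
Qed.

Lemma cut_reaches th s : halted M (C' th) -> i + d < chead (C s) ->
  exists t'', chead (C' t'') + d = chead (C s).
Proof.
  intros Hth Hs.
  destruct (simulated_always th) as [tL [tR [Hn _ _ Hph Hreach]]].
  destruct (Nat.le_gt_cases s tR) as [Hle|Hgt]; [apply Hreach; assumption|].
  destruct Hph as [[_ [_ [HsL HhR]]] | [_ [_ [HsR _]]]].
  - assert (HtL : halted M (C tL)) by (unfold halted in *; rewrite <- HsL; exact Hth).
    assert (E : crossings M c (i + d) tR = crossings M c (i + d) (Nat.max s H)).
    { rewrite <- Hn, (crossings_after_halt M c (i + d) H (Nat.max s H)) by (assumption || lia).
      rewrite <- (crossings_after_halt M c i tL (Nat.max tL H)) by (assumption || lia).
      rewrite (crossings_after_halt M c i H (Nat.max tL H)) by (assumption || lia).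
      unfold crossings; rewrite same_crossing_seq; reflexivity. }
    enough (chead (C s) <= i + d) by lia.
    apply (stays_left M c (i + d) tR s); try lia.
    intros; apply (no_crossing_between M c (i + d) tR (Nat.max s H)); lia.
  - assert (HtR : halted M (C tR)) by (unfold halted in *; rewrite <- HsR; exact Hth).
    rewrite (run_halted_stable M c tR s) in * by (assumption || lia).
    apply Hreach; [lia|assumption].
Qed.

End CutAndPaste.

Section CountingLists.
Context {A : Type} (e : list A) (He : forall a, In a e).

Fixpoint lists_of_length (l : nat) : list (list A) :=
  match l with
  | 0 => [[]]
  | S l => flat_map (fun w => map (fun a => a :: w) e) (lists_of_length l)
  end.

Lemma lists_of_length_complete w : In w (lists_of_length (length w)).
Proof.
  induction w as [|a w IH]; simpl; [left; reflexivity|].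
  apply in_flat_map; exists w; split; [exact IH|].
  apply (in_map (fun b => b :: w)), He.
Qed.

Lemma lists_of_length_size l : length (lists_of_length l) <= length e ^ l.
Proof.
  induction l as [|l IH]; simpl; [lia|].
  rewrite length_flat_map.
  enough (list_sum (map (fun w => length (map (fun a => a :: w) e)) (lists_of_length l))
          = length e * length (lists_of_length l)) as -> by nia.
  clear IH; induction (lists_of_length l) as [|w ws IHws]; simpl; [lia|].
  rewrite length_map, IHws; nia.
Qed.

Fixpoint lists_shorter (L : nat) : list (list A) :=
  match L with 0 => [] | S L => lists_shorter L ++ lists_of_length L end.

Lemma lists_shorter_complete w L : length w < L -> In w (lists_shorter L).
Proof.
  induction L as [|L IH]; intro Hw; [lia|]; simpl; apply in_or_app.
  destruct (Nat.eq_dec (length w) L) as [<-|]; [right; apply lists_of_length_complete|].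
  left; apply IH; lia.
Qed.

Lemma lists_shorter_size L : length (lists_shorter L) + length e ^ L <= S (length e) ^ L.
Proof.
  induction L as [|L IH]; simpl; [lia|].
  rewrite length_app; pose proof (lists_of_length_size L).
  pose proof (Nat.pow_le_mono_l (length e) (S (length e)) L ltac:(lia)); nia.
Qed.

Lemma sum_lengths_ge_count_long (F : nat -> list A) L p :
  L * p <= sum_lengths F p + L * length (filter (fun b => length (F b) <? L) (seq 0 p)).
Proof.
  induction p as [|p IH]; [simpl; lia|].
  rewrite seq_S, filter_app, length_app; cbn [sum_lengths filter Nat.add].
  destruct (Nat.ltb_spec (length (F p)) L); simpl length; nia.
Qed.

(* At most [S (length e) ^ L] of the pairwise distinct lists are shorter than [L]; each of the
   others contributes at least [L]. *)
Lemma sum_lengths_distinct (F : nat -> list A) p L :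
  (forall a b, a < p -> b < p -> F a = F b -> a = b) ->
  L * (p - S (length e) ^ L) <= sum_lengths F p.
Proof.
  intro Hinj.
  set (short := filter (fun b => length (F b) <? L) (seq 0 p)).
  assert (Hnd : NoDup (map F short)).
  { apply NoDup_map_NoDup_ForallPairs; [|apply NoDup_filter, seq_NoDup].
    intros a b Ha Hb; apply filter_In in Ha as [Ha _], Hb as [Hb _].
    apply in_seq in Ha, Hb; apply Hinj; lia. }
  assert (Hincl : incl (map F short) (lists_shorter L)).
  { intros w Hw; apply in_map_iff in Hw as [b [<- Hb]].
    apply filter_In in Hb as [_ Hb]; apply lists_shorter_complete, Nat.ltb_lt, Hb. }
  pose proof (NoDup_incl_length Hnd Hincl) as Hcount; rewrite length_map in Hcount.
  pose proof (lists_shorter_size L); pose proof (sum_lengths_ge_count_long F L p) as Hsum.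
  fold short in Hsum; nia.
Qed.

End CountingLists.

Lemma ln_le_succ_log2 n : 0 < n -> (ln (INR n) <= INR (S (Nat.log2 n)))%R.
Proof.
  intro Hn; set (k := S (Nat.log2 n)).
  assert (Hlt : (INR n < 2 ^ k)%R).
  { replace 2%R with (INR 2) by (simpl; lra); rewrite <- pow_INR.
    apply lt_INR, Nat.log2_spec, Hn. }
  assert (Hln2 : (ln 2 < 1)%R).
  { rewrite <- ln_exp; apply ln_increasing; [lra|].
    pose proof (exp_ineq1 1 ltac:(lra)); lra. }
  assert (H0 : (0 < INR n)%R) by (apply lt_0_INR; lia).
  pose proof (ln_increasing _ _ H0 Hlt) as Hl; rewrite ln_pow in Hl by lra.
  pose proof (pos_INR k); nra.
Qed.

Lemma little_o_nlogn_log2 T K : little_o_nlogn T -> 0 < K ->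
  exists N, forall n, N <= n -> T n * K <= n * S (Nat.log2 n).
Proof.
  intros HT HK.
  assert (Heps : (0 < / INR K)%R) by (apply Rinv_0_lt_compat, lt_0_INR; lia).
  destruct (HT _ Heps) as [N HN]; exists (S N); intros n Hn.
  apply INR_le; rewrite !mult_INR.
  specialize (HN n ltac:(lia)).
  pose proof (ln_le_succ_log2 n ltac:(lia)).
  pose proof (pos_INR n); pose proof (lt_0_INR K HK).
  assert (INR (T n) * INR K <= INR n * ln (INR n))%R.
  { replace (INR n * ln (INR n))%R with (/ INR K * (INR n * ln (INR n)) * INR K)%R by (field; lra).
    apply Rmult_le_compat_r; lra. }
  nra.
Qed.

(* With [L := log2 n / (2 r)], [r ^ L <= sqrt n], so [L * (n + 1 - r ^ L)] is of order
   [n log n / r]: more than [n log n / (8 r)]. *)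
Lemma log_budget_exceeded r n : 0 < r -> 2 ^ (4 * r) + 4 <= n ->
  n * S (Nat.log2 n) < (Nat.log2 n / (2 * r)) * (S n - r ^ (Nat.log2 n / (2 * r))) * (8 * r).
Proof.
  intros Hr Hn.
  set (l := Nat.log2 n); set (L := l / (2 * r)).
  assert (Hl : 2 ^ l <= n) by (apply Nat.log2_spec; lia).
  assert (Hrl : 4 * r <= l) by (apply Nat.log2_le_pow2; lia).
  assert (HL : l < 2 * r * (L + 1)).
  { pose proof (Nat.div_mod l (2 * r) ltac:(lia)).
    pose proof (Nat.mod_upper_bound l (2 * r) ltac:(lia)); unfold L; nia. }
  assert (HL2 : 2 <= L) by nia.
  assert (Hpow : r ^ L <= 2 ^ (r * L)).
  { rewrite Nat.pow_mul_r; apply Nat.pow_le_mono_l, Nat.lt_le_incl, Nat.pow_gt_lin_r; lia. }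
  assert (Hsq : 2 ^ (r * L) * 2 ^ (r * L) <= n).
  { rewrite <- Nat.pow_add_r; apply (Nat.le_trans _ (2 ^ l)); [|exact Hl].
    apply Nat.pow_le_mono_r; [lia|].
    pose proof (Nat.Div0.mul_div_le l (2 * r)); unfold L; nia. }
  set (a := r ^ L) in *.
  assert (Ha : 2 * a <= n).
  { destruct (Nat.le_gt_cases a 1); [lia|].
    assert (a * a <= n) by (apply (Nat.le_trans _ _ _ (Nat.mul_le_mono _ _ _ _ Hpow Hpow)), Hsq).
    nia. }
  nia.
Qed.

Lemma init_config_cut {Sigma : Type} (M : TM Sigma) x i d : i + d <= length x ->
  let x' := firstn i x ++ skipn (i + d) x in
  length x' = length x - d /\
  (forall p, p <= i -> ctape (init_config M x') p = ctape (init_config M x) p) /\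
  (forall p, i < p -> ctape (init_config M x') p = ctape (init_config M x) (p + d)).
Proof.
  intros Hx x'; subst x'; assert (Hi : length (firstn i x) = i) by (rewrite length_firstn; lia).
  split; [rewrite length_app, length_skipn, Hi; lia|split].
  - intros [|p] Hp; simpl; [reflexivity|].
    rewrite nth_error_app1, nth_error_firstn by lia.
    destruct (Nat.ltb_spec p i); [reflexivity|lia].
  - intros [|p] Hp; [lia|]; simpl.
    rewrite nth_error_app2, nth_error_skipn, Hi by lia.
    replace (i + d + (p - i)) with (p + d) by lia; reflexivity.
Qed.

Section Kobayashi.
Context {Sigma : Type} (M : TM Sigma) (T : nat -> nat).
Hypothesis T_small : little_o_nlogn T.
Hypothesis halts_within_T : forall x, halted M (run M (T (length x)) (init_config M x)).

Local Notation run_on x t := (run M t (init_config M x)).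

Lemma head_le_T x t : chead (run_on x t) <= T (length x).
Proof.
  destruct (Nat.le_gt_cases t (T (length x))).
  - pose proof (head_le_time M (init_config M x) t eq_refl); lia.
  - rewrite (run_halted_stable M _ (T (length x)) t) by (apply halts_within_T || lia).
    apply head_le_time; reflexivity.
Qed.

Lemma cut_shortens_reach x i d s :
  i + d <= length x ->
  crossing_seq M (init_config M x) i (T (length x)) =
    crossing_seq M (init_config M x) (i + d) (T (length x)) ->
  i + d < chead (run_on x s) ->
  exists t, chead (run_on (firstn i x ++ skipn (i + d) x) t) + d = chead (run_on x s).
Proof.
  intros Hx Hseq Hs.
  destruct (init_config_cut M x i d Hx) as [_ [HtL HtR]].
  apply (cut_reaches M (init_config M x) (init_config M (firstn i x ++ skipn (i + d) x))
           i d (T (length x))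
           eq_refl eq_refl eq_refl HtL HtR (halts_within_T x) Hseq
           (T (length (firstn i x ++ skipn (i + d) x)))); [apply halts_within_T|exact Hs].
Qed.

Lemma head_bounded : exists B, forall x t, chead (run_on x t) <= length x + B.
Proof.
  destruct (tstate_fin _ M) as [e He]; set (r := S (length e)).
  destruct (little_o_nlogn_log2 T (8 * r) T_small ltac:(lia)) as [N HN].
  set (N' := N + 2 ^ (4 * r) + 4); exists (list_max (map T (seq 0 N'))).
  set (B := list_max (map T (seq 0 N'))).
  intro x; remember (length x) as n eqn:Hn; revert x Hn.
  induction n as [n IH] using (well_founded_induction Wf_nat.lt_wf); intros x Hn t.
  destruct (Nat.le_gt_cases (chead (run_on x t)) (n + B)) as [|Hfar]; [assumption|exfalso].
  destruct (head_passes_through M (init_config M x) t (S (n + B)) eq_refl ltac:(lia)) as [s Hs].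
  destruct (Nat.lt_ge_cases n N') as [Hsmall|Hlarge].
  - assert (T n <= B).
    { apply (proj1 (Forall_forall _ _) (proj1 (list_max_le _ _) (le_n B))), in_map, in_seq; lia. }
    pose proof (head_le_T x s); subst n; lia.
  - assert (Hdistinct : forall a b, a < S n -> b < S n ->
      crossing_seq M (init_config M x) a (T n) = crossing_seq M (init_config M x) b (T n) -> a = b).
    { enough (Hcut : forall a b, a < b <= n ->
        crossing_seq M (init_config M x) a (T n) <> crossing_seq M (init_config M x) b (T n)).
      { intros a b Ha Hb Hab; destruct (lt_eq_lt_dec a b) as [[Hlt|]|Hlt]; [|assumption|];
          [contradiction (Hcut a b)|contradiction (Hcut b a)]; auto; lia. }
      intros a b Hab Hseq; subst n.
      destruct (cut_shortens_reach x a (b - a) s) as [t' Ht']; try (rewrite ?Hs; lia).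
      { replace (a + (b - a)) with b by lia; exact Hseq. }
      destruct (init_config_cut M x a (b - a) ltac:(lia)) as [Hlen _].
      assert (IHx := IH (length (firstn a x ++ skipn (a + (b - a)) x)) ltac:(rewrite Hlen; lia)
                        _ eq_refl t').
      rewrite Hlen in IHx; lia. }
    pose proof (sum_lengths_distinct e He _ (S n) (Nat.log2 n / (2 * r)) Hdistinct) as Hlong.
    pose proof (sum_crossings_le_time M (init_config M x) (S n) (T n)).
    pose proof (HN n ltac:(lia)); pose proof (log_budget_exceeded r n ltac:(lia) ltac:(lia)).
    fold r in Hlong; nia.
Qed.

End Kobayashi.

Lemma erase_nonSigma_length {Sigma : Type} (M : TM Sigma) y :
  length (erase_nonSigma M y) <= length y.
Proof.
  induction y as [|a y IH]; [simpl; lia|]; unfold erase_nonSigma in *; simpl.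
  destruct (toSigma M a); simpl; lia.
Qed.

(* The last non-blank cell of the output lies at most [B] cells beyond the input, since the
   head never visits any further cell and the cells beyond the input start blank. *)
Lemma output_length_bound {Sigma : Type} (M : TM Sigma) T f :
  little_o_nlogn T -> computes_in_time M T f -> exists B, forall x, length (f x) <= length x + B.
Proof.
  intros HT Hc.
  destruct (head_bounded M T HT (fun x => proj1 (Hc x))) as [B HB]; exists B; intro x.
  destruct (Hc x) as [_ [y [[_ [Hy [_ Hend]]] ->]]].
  eapply Nat.le_trans; [apply erase_nonSigma_length|].
  destruct Hend as [->|[y' [a [-> Ha]]]]; [simpl; lia|].
  rewrite length_app; simpl.
  destruct (Nat.le_gt_cases (length y' + 1) (length x + B)) as [|Hgt]; [lia|exfalso].
  assert (Hlast : nth_error (y' ++ [a]) (length y') = Some a)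
    by (rewrite nth_error_app2, Nat.sub_diag by lia; reflexivity).
  apply Hy in Hlast.
  rewrite (tape_unvisited M (init_config M x) (S (length y')) 0) in Hlast;
    [|lia|intros s _; specialize (HB x s); lia].
  simpl in Hlast; rewrite (proj2 (nth_error_None x (length y'))) in Hlast by lia.
  apply Ha; symmetry; exact Hlast.
Qed.

Lemma uniform_length_bound {A Sigma : Type} (P : A -> (list Sigma -> list Sigma) -> Prop) l :
  (forall s, In s l -> exists f, P s f /\ exists B, forall w, length (f w) <= length w + B) ->
  exists B, forall s, In s l -> exists f, P s f /\ forall w, length (f w) <= length w + B.
Proof.
  induction l as [|s0 l IH]; intro Hl; [exists 0; intros s []|].
  destruct IH as [B HB]; [intros s Hs; apply Hl; right; exact Hs|].
  destruct (Hl s0 (or_introl eq_refl)) as [f0 [Hf0 [B0 HB0]]].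
  exists (Nat.max B B0); intros s [<-|Hs].
  - exists f0; split; [exact Hf0|]; intro w; specialize (HB0 w); lia.
  - destruct (HB s Hs) as [f [Hf Hlen]]; exists f; split; [exact Hf|].
    intro w; specialize (Hlen w); lia.
Qed.

Section Group.
Variables (G : Type) (mul : G -> G -> G) (one : G) (inv : G -> G).
Hypothesis mul_assoc : forall x y z, mul x (mul y z) = mul (mul x y) z.
Hypothesis mul_one_l : forall x, mul one x = x.
Hypothesis mul_inv_l : forall x, mul (inv x) x = one.

Lemma mul_one_r x : mul x one = x.
Proof.
  assert (Hidem : mul (mul x (inv x)) (mul x (inv x)) = mul x (inv x)).
  { rewrite <- mul_assoc, (mul_assoc (inv x) x (inv x)), mul_inv_l, mul_one_l; reflexivity. }
  assert (Hx : mul x (inv x) = one).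
  { set (z := mul x (inv x)) in *.
    transitivity (mul (inv z) (mul z z)); [rewrite mul_assoc, mul_inv_l, mul_one_l; reflexivity|].
    rewrite Hidem; apply mul_inv_l. }
  rewrite <- (mul_inv_l x), mul_assoc, Hx; apply mul_one_l.
Qed.

Variables (S : list G) (Sigma : Type) (L : list Sigma -> Prop) (psi : list Sigma -> G) (B : nat).
Hypothesis right_mul_bounded : forall s, In s S -> exists f : list Sigma -> list Sigma,
  (forall w, L w -> L (f w) /\ psi (f w) = mul (psi w) s) /\
  forall w, length (f w) <= length w + B.

Lemma normal_form_along_word ws w : (forall s, In s ws -> In s S) -> L w ->
  exists w', L w' /\ psi w' = mul (psi w) (prodG mul one ws) /\
    length w' <= length w + B * length ws.
Proof.
  revert w; induction ws as [|s ws IH]; intros w Hws Hw.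
  - exists w; simpl; rewrite mul_one_r; repeat split; [assumption|lia].
  - destruct (right_mul_bounded s (Hws s (or_introl eq_refl))) as [f [Hf Hlen]].
    destruct (Hf w Hw) as [Hfw Hpsi].
    destruct (IH (f w) (fun x Hx => Hws x (or_intror Hx)) Hfw) as [w' [Hw' [Hpsi' Hlen']]].
    exists w'; simpl; rewrite Hpsi', Hpsi, <- mul_assoc; repeat split; [assumption|].
    specialize (Hlen w); nia.
Qed.

End Group.

Local Open Scope R_scope.

Theorem theorem1p4
  (G : Type) (mul : G -> G -> G) (one : G) (inv : G -> G)
  (mul_assoc : forall x y z, mul x (mul y z) = mul (mul x y) z)
  (mul_one_l : forall x, mul one x = x)
  (mul_inv_l : forall x, mul (inv x) x = one)
  (S : list G) (HS : semigroup_generates mul one S)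
  (Sigma : Type) (HSigma : FiniteType Sigma)
  (L : list Sigma -> Prop) (psi : list Sigma -> G)
  (psi_inj : forall w1 w2, L w1 -> L w2 -> psi w1 = psi w2 -> w1 = w2)
  (psi_surj : forall g, exists w, L w /\ psi w = g)
  (Hf : forall s, In s S ->
     exists f : list Sigma -> list Sigma,
       (forall w, L w -> L (f w) /\ psi (f w) = mul (psi w) s) /\
       exists (M : TM Sigma) (T : nat -> nat),
         little_o_nlogn T /\ computes_in_time M T f) :
  exists C : R, 0 < C /\
    forall (g : G) (w : list Sigma) (n : nat),
      L w -> psi w = g -> word_length mul one S g n ->
      INR (length w) <= C * (INR n + 1).
Proof.
  destruct (uniform_length_bound
              (fun s f => forall w, L w -> L (f w) /\ psi (f w) = mul (psi w) s) S) as [B HB].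
  { intros s Hs; destruct (Hf s Hs) as [f [Hpsi [M [T [HT Hc]]]]].
    exists f; split; [exact Hpsi|]; exact (output_length_bound M T f HT Hc). }
  destruct (psi_surj one) as [w0 [Hw0 Hpsi0]].
  exists (INR (length w0 + B) + 1); split; [pose proof (pos_INR (length w0 + B)); lra|].
  intros g w n Hw Hpsi [[ws [Hn [Hws Hprod]]] _].
  destruct (normal_form_along_word G mul one inv mul_assoc mul_one_l mul_inv_l S Sigma L psi B HB
              ws w0 Hws Hw0) as [w' [Hw' [Hpsi' Hlen]]].
  rewrite Hpsi0, mul_one_l, Hprod in Hpsi'.
  replace w' with w in Hlen by (apply psi_inj; congruence).
  apply le_INR in Hlen; rewrite Hn, plus_INR, mult_INR in Hlen; rewrite plus_INR.
  pose proof (pos_INR (length w0)); pose proof (pos_INR B); pose proof (pos_INR n); nra.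
Qed.
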